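(* Consider the ride-hailing model in the context and a demand vector $\bm b^C$ with $0\le b^C_i\le b_i$ for all $i$. If $(\bm w^C,\bm x^C)$ is a CV equilibrium for $\bm b^C$, then $\bm x^C$ is an optimal solution of the convex program $\mathcal{CV}(\bm b^C)$ and $\bm w^C$ is a vector of Lagrange multipliers of its capacity constraints $\sum_{j}x_{ji}\le b^C_i$.
   Context: Model. There are $L$ regions $\{1,\dots,L\}$. For regions $i,j$, $b_{ij}\ge0$ is the rate of customers from $i$ to $j$; $b_i=\sum_j b_{ij}$ (assumed $>0$), $q_{ij}=b_{ij}/b_i$. Travel times satisfy $t_{ij}>0$ for $i\neq j$, $t_{ii}=0$. Constants: $p>0$, $c\ge0$, $R\in(0,1)$, CV fleet mass $N>0$. For $i,\alpha$: $\tau^{dr}_{i\alpha}=t_{i\alpha}+\sum_j q_{\alpha j}t_{\alpha j}$ and $r^C_{i\alpha}=p(1-R)\sum_j q_{\alpha j}t_{\alpha j}-c\tau^{dr}_{i\alpha}$. A matrix $\bm x=(x_{i\alpha})\in\mathbb R^{L\times L}_{\ge0}$ satisfies flow balance if $\sum_j(\sum_k x_{kj})q_{ji}=\sum_\alpha x_{i\alpha}$ for all $i$. CV equilibrium for $\bm b^C$: a pair $(\bm w^C,\bm x^C)$, $\bm w^C\in\mathbb R^L_{\ge0}$, $\bm x^C\in\mathbb R^{L\times L}_{\ge0}$, such that (i) $\bm x^C$ maximizes $\sum_{i,\alpha}r^C_{i\alpha}x_{i\alpha}$ over all $\bm x\ge0$ satisfying flow balance and $\sum_{i,\alpha}(\tau^{dr}_{i\alpha}+w^C_\alpha)x_{i\alpha}=N$;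 (ii) $\sum_j x^C_{ji}\le b^C_i$ for all $i$; (iii) $w^C_i(b^C_i-\sum_j x^C_{ji})=0$ for all $i$. $\mathcal{CV}(\bm b^C)$: maximize $N\log\sum_{i,\alpha}r^C_{i\alpha}x_{i\alpha}-\sum_{i,\alpha}\tau^{dr}_{i\alpha}x_{i\alpha}$ over $\bm x\ge0$ satisfying flow balance and $\sum_j x_{ji}\le b^C_i$ for all $i$. *)

From HB Require Import structures.
From mathcomp Require Import all_boot all_order all_algebra.
From mathcomp Require Import all_classical all_reals all_analysis.
Set Implicit Arguments. Unset Strict Implicit. Unset Printing Implicit Defensive.
Import Order.TTheory GRing.Theory Num.Theory.
Local Open Scope ring_scope.

Section RideHailing.
Variables (R : realType) (L : nat).
Implicit Types (b t x y : 'I_L -> 'I_L -> R) (w bC : 'I_L -> R).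

Definition brow b (i : 'I_L) : R := \sum_(j < L) b i j.
Definition qmat b (i j : 'I_L) : R := b i j / brow b i.
Definition tau_dr b t (i a : 'I_L) : R := t i a + \sum_(j < L) qmat b a j * t a j.
Definition rC b t (p rho c : R) (i a : 'I_L) : R :=
  p * (1 - rho) * (\sum_(j < L) qmat b a j * t a j) - c * tau_dr b t i a.

Definition nonneg_mat x := forall i a : 'I_L, 0 <= x i a.

Definition flow_balance b x :=
  forall i : 'I_L,
    \sum_(j < L) (\sum_(k < L) x k j) * qmat b j i = \sum_(a < L) x i a.

Definition revenue b t p rho c x : R :=
  \sum_(i < L) \sum_(a < L) rC b t p rho c i a * x i a.
Definition drive_time b t x : R :=
  \sum_(i < L) \sum_(a < L) tau_dr b t i a * x i a.
Definition fleet_use b t w x : R :=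
  \sum_(i < L) \sum_(a < L) (tau_dr b t i a + w a) * x i a.
Definition inflow x (i : 'I_L) : R := \sum_(j < L) x j i.

Definition CV_equilibrium b t (p rho c N : R) bC w x :=
  [/\ (forall i, 0 <= w i),
      [/\ nonneg_mat x, flow_balance b x & fleet_use b t w x = N],
      (forall y, nonneg_mat y -> flow_balance b y -> fleet_use b t w y = N ->
         revenue b t p rho c y <= revenue b t p rho c x),
      (forall i, inflow x i <= bC i) &
      (forall i, w i * (bC i - inflow x i) = 0)].

(* Objective of CV(bC): N log(sum r x) - sum tau x, with log s = -oo for s <= 0. *)
Definition CV_obj b t (p rho c N : R) x : \bar R :=
  if 0 < revenue b t p rho c x
  then (N * ln (revenue b t p rho c x) - drive_time b t x)%:E
  else -oo%E.

Definition CV_feasible b bC x :=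
  [/\ nonneg_mat x, flow_balance b x & forall i, inflow x i <= bC i].

Definition CV_optimal b t (p rho c N : R) bC x :=
  CV_feasible b bC x /\
  forall y, CV_feasible b bC y -> (CV_obj b t p rho c N y <= CV_obj b t p rho c N x)%E.

Definition CV_lagrangian b t (p rho c N : R) bC w x : \bar R :=
  (CV_obj b t p rho c N x + (\sum_(i < L) w i * (bC i - inflow x i))%:E)%E.

(* w is a vector of Lagrange multipliers of the capacity constraints at x:
   dual feasibility, complementary slackness, and x maximizes the Lagrangian
   over the remaining constraints (x >= 0, flow balance). *)
Definition capacity_multipliers b t (p rho c N : R) bC w x :=
  [/\ (forall i, 0 <= w i),
      (forall i, w i * (bC i - inflow x i) = 0) &
      forall y, nonneg_mat y -> flow_balance b y ->
        (CV_lagrangian b t p rho c N bC w y <= CV_lagrangian b t p rho c N bC w x)%E].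

End RideHailing.

From HB Require Import structures.
From mathcomp Require Import all_boot all_order all_algebra.
From mathcomp Require Import all_classical all_reals all_analysis.
From mathcomp Require Import ring lra.
Set Implicit Arguments. Unset Strict Implicit. Unset Printing Implicit Defensive.
Import Order.TTheory GRing.Theory Num.Theory.
Local Open Scope ring_scope.

(* Put K := p (1 - R).  Since r^C <= K (tau^dr + w) entrywise, a flow with
   positive revenue has positive fleet use F(y) = sum (tau^dr + w) y, and as the
   CV feasible set is a slice of a cone, rescaling y to fleet use N shows
   r(y) <= F(y)/N r(x).  Where r(y) > 0, the Lagrangian of CV(b^C) equals
   N ln r(y) - F(y) + sum_i w_i b^C_i, and ln a <= a - 1 turns the rescaling
   bound into N ln r(y) - F(y) <= N ln r(x) - N = N ln r(x) - F(x).
   Complementary slackness makes the Lagrangian agree with the objective at x,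
   and dual feasibility makes it dominate the objective on the CV feasible set. *)

Lemma ln_le_subr1 (R : realType) (a : R) : 0 < a -> ln a <= a - 1.
Proof.
move=> a_gt0; have := @le_ln1Dx R (a - 1).
by rewrite addrCA subrr addr0; apply; rewrite ltrBrDl subrr.
Qed.

Lemma mul_ln_subr_le (R : realType) (N f u v : R) :
  0 < N -> 0 < f -> 0 < u -> 0 < v -> u <= f / N * v -> N * ln u - f <= N * ln v - N.
Proof.
move=> N_gt0 f_gt0 u_gt0 v_gt0 le_uv.
have fN_gt0 : 0 < f / N by rewrite divr_gt0.
have ln_le : ln u <= f / N - 1 + ln v.
  have : ln u <= ln (f / N * v) by rewrite ler_ln ?posrE // mulr_gt0.
  by move/le_trans; apply; rewrite lnM ?posrE // lerD2r ln_le_subr1.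
have -> : N * ln v - N = N * (f / N - 1 + ln v) - f by field; rewrite gt_eqF.
by rewrite lerD2r; apply: ler_wpM2l => //; rewrite ltW.
Qed.

Section RideHailingFacts.
Variables (R : realType) (L : nat) (b t : 'I_L -> 'I_L -> R).
Implicit Types (x y : 'I_L -> 'I_L -> R) (w bC : 'I_L -> R).

Lemma sum_pairingZ (f : 'I_L -> 'I_L -> R) (k : R) y :
  \sum_(i < L) \sum_(a < L) f i a * (k * y i a)
  = k * \sum_(i < L) \sum_(a < L) f i a * y i a.
Proof.
rewrite mulr_sumr; apply: eq_bigr => i _; rewrite mulr_sumr.
by apply: eq_bigr => a _; rewrite mulrCA.
Qed.

Lemma nonneg_matZ (k : R) y : 0 <= k -> nonneg_mat y -> nonneg_mat (fun i a => k * y i a).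
Proof. by move=> k_ge0 y_ge0 i a; rewrite mulr_ge0. Qed.

Lemma flow_balanceZ (k : R) y : flow_balance b y -> flow_balance b (fun i a => k * y i a).
Proof.
move=> fb_y i; rewrite -mulr_sumr -fb_y mulr_sumr; apply: eq_bigr => j _.
by rewrite -mulr_sumr mulrA.
Qed.

Lemma fleet_useE w y :
  fleet_use b t w y = drive_time b t y + \sum_(a < L) w a * inflow y a.
Proof.
have -> : \sum_(a < L) w a * inflow y a = \sum_(i < L) \sum_(a < L) w a * y i a.
  by rewrite exchange_big; apply: eq_bigr => a _; rewrite mulr_sumr.
rewrite -big_split; apply: eq_bigr => i _.
by rewrite -big_split; apply: eq_bigr => a _; rewrite mulrDl.
Qed.

Lemma capacity_slackE w bC y :
  \sum_(i < L) w i * (bC i - inflow y i)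
  = \sum_(i < L) w i * bC i - \sum_(i < L) w i * inflow y i.
Proof. by rewrite -sumrB; apply: eq_bigr => i _; rewrite mulrBr. Qed.

Variables (p rho c N : R).

Lemma CV_lagrangianE bC w y : 0 < revenue b t p rho c y ->
  CV_lagrangian b t p rho c N bC w y
  = (N * ln (revenue b t p rho c y) - fleet_use b t w y + \sum_(i < L) w i * bC i)%:E.
Proof.
move=> rev_gt0; rewrite /CV_lagrangian /CV_obj rev_gt0 -EFinD capacity_slackE fleet_useE.
by congr EFin; ring.
Qed.

Lemma revenue_le_rescaled w x y : 0 < N ->
  (forall z, nonneg_mat z -> flow_balance b z -> fleet_use b t w z = N ->
     revenue b t p rho c z <= revenue b t p rho c x) ->
  nonneg_mat y -> flow_balance b y -> 0 < fleet_use b t w y ->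
  revenue b t p rho c y <= fleet_use b t w y / N * revenue b t p rho c x.
Proof.
move=> N_gt0 x_max y_ge0 fb_y F_gt0; set k := N / fleet_use b t w y.
have k_gt0 : 0 < k by rewrite divr_gt0.
have kF : k * fleet_use b t w y = N by rewrite divfK ?gt_eqF.
have := x_max _ (nonneg_matZ (ltW k_gt0) y_ge0) (flow_balanceZ k fb_y).
rewrite /fleet_use /revenue !sum_pairingZ -/(fleet_use _ _ _ _) -/(revenue _ _ _ _ _ _).
move=> /(_ kF) le_kr.
have -> : fleet_use b t w y / N = k^-1 by rewrite invf_div.
by rewrite -(ler_pM2l k_gt0) mulrA mulfV ?gt_eqF // mul1r.
Qed.

Lemma CV_obj_le_lagrangian bC w y : (forall i, 0 <= w i) ->
  (forall i, inflow y i <= bC i) ->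
  (CV_obj b t p rho c N y <= CV_lagrangian b t p rho c N bC w y)%E.
Proof.
move=> w_ge0 y_cap; rewrite /CV_lagrangian leeDl // lee_fin sumr_ge0 // => i _.
by rewrite mulr_ge0 ?subr_ge0.
Qed.

Lemma CV_lagrangian_slack bC w x : (forall i, w i * (bC i - inflow x i) = 0) ->
  CV_lagrangian b t p rho c N bC w x = CV_obj b t p rho c N x.
Proof. by move=> cs; rewrite /CV_lagrangian big1 ?adde0. Qed.

Hypotheses (b_ge0 : forall i j, 0 <= b i j) (t_ge0 : forall i j, 0 <= t i j).
Hypotheses (p_ge0 : 0 <= p) (rho_le1 : rho <= 1) (c_ge0 : 0 <= c).

Lemma mean_trip_time_ge0 (a : 'I_L) : 0 <= \sum_(j < L) qmat b a j * t a j.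
Proof. by rewrite sumr_ge0 // => j _; rewrite mulr_ge0 ?divr_ge0 ?sumr_ge0. Qed.

Lemma revenue_le_fleet_use w y : (forall a, 0 <= w a) -> nonneg_mat y ->
  revenue b t p rho c y <= p * (1 - rho) * fleet_use b t w y.
Proof.
move=> w_ge0 y_ge0; rewrite /revenue /fleet_use mulr_sumr ler_sum // => i _.
rewrite mulr_sumr ler_sum // => a _; rewrite mulrA ler_wpM2r //.
have K_ge0 : 0 <= p * (1 - rho) by rewrite mulr_ge0 ?subr_ge0.
rewrite /rC /tau_dr; set K := p * (1 - rho); set m := \sum_(j < L) _.
have m_ge0 : 0 <= m := mean_trip_time_ge0 a.
have : 0 <= c * (t i a + m) by rewrite mulr_ge0 ?addr_ge0.
have : 0 <= K * (t i a + w a) by rewrite mulr_ge0 ?addr_ge0.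
lra.
Qed.

Lemma fleet_use_gt0 w y : (forall a, 0 <= w a) -> nonneg_mat y ->
  0 < revenue b t p rho c y -> 0 < fleet_use b t w y.
Proof.
move=> w_ge0 y_ge0 rev_gt0; rewrite ltNge; apply/negP => F_le0.
have K_ge0 : 0 <= p * (1 - rho) by rewrite mulr_ge0 ?subr_ge0.
have := revenue_le_fleet_use w_ge0 y_ge0.
by rewrite leNgt (le_lt_trans (mulr_ge0_le0 K_ge0 F_le0)).
Qed.

Lemma CV_lagrangian_le_equilibrium bC w x y : 0 < N ->
  CV_equilibrium b t p rho c N bC w x -> nonneg_mat y -> flow_balance b y ->
  (CV_lagrangian b t p rho c N bC w y <= CV_lagrangian b t p rho c N bC w x)%E.
Proof.
move=> N_gt0 [w_ge0 [_ _ F_x] x_max _ _] y_ge0 fb_y.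
have [ry_gt0|ry_le0] := ltP 0 (revenue b t p rho c y); last first.
  by rewrite /CV_lagrangian /CV_obj ltNge ry_le0 addNye leNye.
have F_gt0 := fleet_use_gt0 w_ge0 y_ge0 ry_gt0.
have le_rescaled := revenue_le_rescaled N_gt0 x_max y_ge0 fb_y F_gt0.
have rx_gt0 : 0 < revenue b t p rho c x.
  by rewrite -(pmulr_rgt0 _ (divr_gt0 F_gt0 N_gt0)) (lt_le_trans ry_gt0).
rewrite !CV_lagrangianE // lee_fin lerD2r F_x.
exact: mul_ln_subr_le.
Qed.

End RideHailingFacts.

Theorem proposition1 (R : realType) (L : nat)
  (b t : 'I_L -> 'I_L -> R) (p c rho N : R) (bC w : 'I_L -> R)
  (x : 'I_L -> 'I_L -> R)
  (hb0 : forall i j, 0 <= b i j)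
  (hbpos : forall i, 0 < brow b i)
  (ht : forall i j, i != j -> 0 < t i j)
  (htii : forall i, t i i = 0)
  (hp : 0 < p) (hc : 0 <= c) (hrho0 : 0 < rho) (hrho1 : rho < 1) (hN : 0 < N)
  (hbC : forall i, 0 <= bC i /\ bC i <= brow b i)
  (heq : CV_equilibrium b t p rho c N bC w x) :
  CV_optimal b t p rho c N bC x /\ capacity_multipliers b t p rho c N bC w x.
Proof.
have t_ge0 i j : 0 <= t i j.
  by have [->|/ht/ltW //] := eqVneq i j; rewrite htii.
have rho_le1 : rho <= 1 by rewrite ltW.
have [w_ge0 [x_ge0 fb_x _] _ x_cap cs] := heq.
have lagr_le := CV_lagrangian_le_equilibrium hb0 t_ge0 (ltW hp) rho_le1 hc hN heq.
split; first split=> // y [y_ge0 fb_y y_cap].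
  rewrite -(CV_lagrangian_slack b t p rho c N cs).
  exact: le_trans (CV_obj_le_lagrangian b t p rho c N w_ge0 y_cap) (lagr_le y y_ge0 fb_y).
by split=> // y y_ge0 fb_y; exact: lagr_le.
Qed.
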